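(* The group $W=\bigoplus_{i\in\mathbf{N}}W_i$ embeds in both $(\wr\mathbf{Z})^{\infty}$ and $(\mathbf{Z}\wr)^{\infty}$.
   Context: Restricted wreath product: $A\wr\mathbf{Z}=(\bigoplus_{i\in\mathbf{Z}}A)\rtimes\mathbf{Z}$. $W_0=1$, $W_i=W_{i-1}\wr\mathbf{Z}$; $(\mathbf{Z}\wr)^{\infty}$ is the ascending union of the $W_i$ with $W_i$ embedded in $W_{i+1}$ as the index-$0$ base summand. For permutation groups $(K,X)$, $(L,Y)$, the permutation wreath product $K\wr L\le\mathrm{Sym}(X\times Y)$ is generated by $(x,y)\mapsto(x\kappa,y)$, $(x,y')\mapsto(x,y')$ for $y'\neq y$ ($\kappa\in K$, $y\in Y$) and $(x,y)\mapsto(x,y\lambda)$ ($\lambda\in L$). $P_1=\mathbf{Z}$ on $\mathbf{Z}$ by translation, $P_{k+1}=\mathbf{Z}\wr P_k$ (permutation wreath product) with $P_k$ the top group; $(\wr\mathbf{Z})^{\infty}$ is the ascending union of the $P_k$. *)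

(* Infinite groups are represented concretely as "setoid groups":
   a carrier type, a membership predicate (the actual group is the set of
   members), an equality relation, and the group operations. *)
From Stdlib Require Import ZArith Arith.

Set Implicit Arguments.

Record Grp : Type := MkGrp {
  gT : Type;
  gmem : gT -> Prop;
  geq : gT -> gT -> Prop;
  gmul : gT -> gT -> gT;
  ginv : gT -> gT;
  gone : gT }.

Definition embeds (G H : Grp) : Prop :=
  exists f : gT G -> gT H,
    (forall x, gmem G x -> gmem H (f x)) /\
    (forall x y, gmem G x -> gmem G y -> (geq H (f x) (f y) <-> geq G x y)) /\
    (forall x y, gmem G x -> gmem G y ->
        geq H (f (gmul G x y)) (gmul H (f x) (f y))).

Definition trivG : Grp :=
  MkGrp (fun _ : unit => True) (fun _ _ => True) (fun _ _ => tt) (fun _ => tt) tt.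

(** Restricted wreath product A wr Z = (sum_{i in Z} A) x| Z, with Z acting
    by shifting indices: (f,n)(g,m) = (i |-> f i * g (i - n), n + m). *)
Definition wrZ (A : Grp) : Grp :=
  MkGrp (gT := ((Z -> gT A) * Z)%type)
    (fun p => (forall i, gmem A (fst p i)) /\
              exists N : Z, forall i, (N < Z.abs i)%Z -> geq A (fst p i) (gone A))
    (fun p q => (forall i, geq A (fst p i) (fst q i)) /\ snd p = snd q)
    (fun p q => (fun i => gmul A (fst p i) (fst q (i - snd p)%Z), (snd p + snd q)%Z))
    (fun p => (fun i => ginv A (fst p (i + snd p)%Z), (- snd p)%Z))
    (fun _ => gone A, 0%Z).

Fixpoint Wg (i : nat) : Grp :=
  match i with
  | O => trivG
  | S j => wrZ (Wg j)
  end.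

Definition Wsum : Grp :=
  MkGrp (gT := forall i : nat, gT (Wg i))
    (fun x => (forall i, gmem (Wg i) (x i)) /\
              exists N : nat, forall i, (N < i)%nat -> geq (Wg i) (x i) (gone (Wg i)))
    (fun x y => forall i, geq (Wg i) (x i) (y i))
    (fun x y => fun i => gmul (Wg i) (x i) (y i))
    (fun x => fun i => ginv (Wg i) (x i))
    (fun i => gone (Wg i)).

(** Ascending union (direct limit) of a chain G 0 -> G 1 -> ... along maps phi. *)
Section DirLim.
Variable G : nat -> Grp.
Variable phi : forall m, gT (G m) -> gT (G (S m)).

(* image of x : G i in G n (meaningful for i <= n) *)
Local Unset Implicit Arguments.
Fixpoint lift (i : nat) (x : gT (G i)) (n : nat) {struct n} : gT (G n) :=
  match Nat.eq_dec i n with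
  | left e => eq_rect i (fun k => gT (G k)) x n e
  | right _ =>
      match n return gT (G n) with
      | O => gone (G O)
      | S m => phi m (lift i x m)
      end
  end.

Definition dirlim : Grp :=
  MkGrp (gT := {i : nat & gT (G i)})
    (fun p => gmem (G (projT1 p)) (projT2 p))
    (fun p q => exists n, (projT1 p <= n)%nat /\ (projT1 q <= n)%nat /\
                  geq (G n) (lift _ (projT2 p) n) (lift _ (projT2 q) n))
    (fun p q => existT (fun k => gT (G k)) (Nat.max (projT1 p) (projT1 q))
                  (gmul _ (lift _ (projT2 p) _) (lift _ (projT2 q) _)))
    (fun p => existT (fun k => gT (G k)) (projT1 p) (ginv _ (projT2 p)))
    (existT (fun k => gT (G k)) O (gone (G O))).
End DirLim.

(** (Z wr)^infty: union of the W_i, W_i embedded in W_{i+1} as index-0 summand *)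
Definition ZwrInf : Grp :=
  dirlim Wg (fun i (a : gT (Wg i)) =>
     ((fun j : Z => if Z.eq_dec j 0 then a else gone (Wg i)), 0%Z)
     : gT (Wg (S i))).

(** Permutations of X, represented by a function and its inverse; the product
    is composition with right actions: x (s t) = (x s) t. *)
Definition perm (X : Type) : Type := ((X -> X) * (X -> X))%type.

Definition isperm X (s : perm X) : Prop :=
  (forall x, snd s (fst s x) = x) /\ (forall x, fst s (snd s x) = x).

Definition pmul X (s t : perm X) : perm X :=
  (fun x => fst t (fst s x), fun x => snd s (snd t x)).
Definition pinv X (s : perm X) : perm X := (snd s, fst s).
Definition pid X : perm X := (fun x => x, fun x => x).

Inductive gen X (S : perm X -> Prop) : perm X -> Prop :=
| gen_base s : S s -> gen S s
| gen_one : gen S (pid X)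
| gen_mul s t : gen S s -> gen S t -> gen S (pmul s t)
| gen_inv s : gen S s -> gen S (pinv s)
| gen_ext s t : gen S s -> (forall x, fst s x = fst t x) ->
                (forall x, snd s x = snd t x) -> gen S t.

Definition PermG (X : Type) (P : perm X -> Prop) : Grp :=
  MkGrp (gT := perm X) (fun s => isperm s /\ P s)
    (fun s t => forall x, fst s x = fst t x) (@pmul X) (@pinv X) (pid X).

Definition basegen X Y (deqY : forall a b : Y, {a = b} + {a <> b})
  (k : perm X) (y : Y) : perm (X * Y) :=
  (fun p => if deqY (snd p) y then (fst k (fst p), snd p) else p,
   fun p => if deqY (snd p) y then (snd k (fst p), snd p) else p).

Definition topgen X Y (l : perm Y) : perm (X * Y) :=
  (fun p => (fst p, fst l (snd p)), fun p => (fst p, snd l (snd p))).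

Definition pwr X Y (deqY : forall a b : Y, {a = b} + {a <> b})
  (K : perm X -> Prop) (L : perm Y -> Prop) : perm (X * Y) -> Prop :=
  gen (fun s => (exists k y, K k /\ s = basegen deqY k y) \/
                (exists l, L l /\ s = topgen X l)).

Definition transl : perm Z -> Prop :=
  fun s => exists n : Z, s = (fun x => (x + n)%Z, fun x => (x - n)%Z).

(** Yt n = Z^(n+1), the set on which P_(n+1) acts *)
Fixpoint Yt (n : nat) : Type :=
  match n with
  | O => Z
  | S m => (Z * Yt m)%type
  end.

Definition Ydec (n : nat) : forall a b : Yt n, {a = b} + {a <> b}.
Proof.
  induction n as [|n IH]; simpl.
  - exact Z.eq_dec.
  - intros a b; decide equality; solve [apply IH | apply Z.eq_dec].
Defined.

(** Ppred n = P_(n+1): P_1 = translations, P_(k+1) = Z wr P_k *)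
Fixpoint Ppred (n : nat) : perm (Yt n) -> Prop :=
  match n with
  | O => transl
  | S m => pwr (Ydec m) transl (Ppred m)
  end.

Definition Pg (n : nat) : Grp := @PermG (Yt n) (Ppred n).

(** (wr Z)^infty: union of the P_k, P_k embedded in P_(k+1) as the top group *)
Definition wrZInf : Grp :=
  dirlim Pg (fun n (l : gT (Pg n)) => topgen Z l : gT (Pg (S n))).

(* W_K sits in W_(K+1) as the base summand at index 0, and base summands at
   distinct indices commute.  So the components x_1, ..., x_K of x in W pack
   into W_(K+1): x_1, ..., x_(K-1) recursively at index 0 and x_K at index 1.
   These packings are compatible with the inclusions of the chain, and every
   element of W has finite support, so they define an injective homomorphism
   into the union (Z wr)^oo.

   For (wr Z)^oo, W_(k+1) = W_k wr Z acts faithfully on Z^(k+1) as an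
   iterated permutation wreath product; by associativity of permutation wreath
   products this action lies in P_(k+1), and P_a wr P_b lies in P_(a+1+b).
   At stage K the earlier components act on the top coordinates and fix a
   point c, while x_K acts on the fibre over c; so the two commute, and the
   stages are again compatible with the inclusions P_k < P_(k+1) as top
   group. *)

From Stdlib Require Import ZArith Arith Lia List Setoid Morphisms.
From Stdlib Require Import Eqdep_dec FunctionalExtensionality ClassicalEpsilon.
Open Scope Z_scope.

Record setoid_monoid (G : Grp) : Prop := {
  sm_equiv : Equivalence (geq G);
  sm_mul_proper : Proper (geq G ==> geq G ==> geq G) (gmul G);
  sm_mul_one : geq G (gmul G (gone G) (gone G)) (gone G);
  sm_mem_one : gmem G (gone G);
  sm_mem_mul : forall x y, gmem G x -> gmem G y -> gmem G (gmul G x y) }.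
Arguments sm_equiv {G}.
Arguments sm_mul_proper {G}.
Arguments sm_mem_mul {G}.

Lemma trivG_setoid_monoid : setoid_monoid trivG.
Proof. repeat split; repeat intro; exact I. Qed.

#[export] Instance wrZ_equiv (A : Grp) `{Equivalence _ (geq A)} : Equivalence (geq (wrZ A)).
Proof.
  split.
  - intros p; split; reflexivity.
  - intros p q [h e]; split; [symmetry; apply h | congruence].
  - intros p q r [h e] [h' e']; split; [etransitivity; eauto | congruence].
Qed.

Lemma wrZ_setoid_monoid {A : Grp} : setoid_monoid A -> setoid_monoid (wrZ A).
Proof.
  intros [A_equiv A_mul A_one A_mem1 A_memM]; split.
  - exact _.
  - intros [f n] [f' n'] [h e] [g m] [g' m'] [h' e']; simpl in *; subst.
    split; [intros i; apply A_mul; auto | reflexivity].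
  - split; [intros i; exact A_one | reflexivity].
  - split; [intros i; exact A_mem1 | exists 0; reflexivity].
  - intros [f n] [g m] [hf [Nf Hf]] [hg [Ng Hg]]; simpl in *; split.
    + intros i; auto.
    + exists (Z.abs Nf + Z.abs Ng + Z.abs n); intros i hi.
      rewrite (Hf i), (Hg (i - n)) by lia; exact A_one.
Qed.

Lemma Wg_setoid_monoid k : setoid_monoid (Wg k).
Proof.
  induction k; [exact trivG_setoid_monoid | exact (wrZ_setoid_monoid IHk)].
Qed.

#[export] Instance Wg_equiv k : Equivalence (geq (Wg k)) := sm_equiv (Wg_setoid_monoid k).
#[export] Instance Wg_mul_proper k : Proper (geq _ ==> geq _ ==> geq _) (gmul (Wg k))
  := sm_mul_proper (Wg_setoid_monoid k).

Lemma Wg_mul_one k : geq (Wg k) (gmul _ (gone _) (gone _)) (gone _).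
Proof. exact (sm_mul_one _ (Wg_setoid_monoid k)). Qed.

Lemma Wg_mem_one k : gmem (Wg k) (gone _).
Proof. exact (sm_mem_one _ (Wg_setoid_monoid k)). Qed.

Definition supported_upto (N : nat) (x : gT Wsum) : Prop :=
  forall i, (N < i)%nat -> geq (Wg i) (x i) (gone (Wg i)).

Lemma Wsum_mem_mul {x y} : gmem Wsum x -> gmem Wsum y -> gmem Wsum (gmul Wsum x y).
Proof.
  intros [hx [Nx Hx]] [hy [Ny Hy]]; split.
  - intros i; apply (sm_mem_mul (Wg_setoid_monoid i)); auto.
  - exists (Nat.max Nx Ny); intros i hi; simpl.
    rewrite (Hx i), (Hy i) by lia; apply Wg_mul_one.
Qed.

Definition support_bound (x : gT Wsum) : nat :=
  epsilon (inhabits 0%nat) (fun N => supported_upto N x).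

Lemma support_boundP {x} : gmem Wsum x -> supported_upto (support_bound x) x.
Proof. intros [_ hx]; exact (epsilon_spec (inhabits 0%nat) _ hx). Qed.

(** * Embedding the direct sum into an ascending union *)

Section DirlimEmbedding.

Variable H : nat -> Grp.
Variable phi : forall n, gT (H n) -> gT (H (S n)).

Lemma lift_self {i} (a : gT (H i)) : lift H phi i a i = a.
Proof.
  destruct i as [|i]; cbn [lift];
    [destruct (Nat.eq_dec 0 0) as [e|] | destruct (Nat.eq_dec (S i) (S i)) as [e|]];
    try (rewrite (UIP_refl_nat _ e); reflexivity); congruence.
Qed.

Lemma lift_S {i} (a : gT (H i)) {n} : (i <= n)%nat ->
  lift H phi i a (S n) = phi n (lift H phi i a n).
Proof. intros hn; simpl; destruct (Nat.eq_dec i (S n)); [lia | reflexivity]. Qed.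

Lemma lift_lift {i} (a : gT (H i)) {j n} : (i <= j)%nat -> (j <= n)%nat ->
  lift H phi j (lift H phi i a j) n = lift H phi i a n.
Proof.
  intros hij hjn; induction hjn as [|n hjn IH]; [apply lift_self|].
  rewrite !lift_S by lia; congruence.
Qed.

Context {H_equiv : forall n, Equivalence (geq (H n))}.
Hypothesis H_mul_proper : forall n, Proper (geq _ ==> geq _ ==> geq _) (gmul (H n)).
Hypothesis phi_proper : forall n, Proper (geq _ ==> geq _) (phi n).
Hypothesis phi_mul : forall n a b, geq _ (phi n (gmul _ a b)) (gmul _ (phi n a) (phi n b)).

Lemma lift_proper {i n} : (i <= n)%nat -> Proper (geq _ ==> geq _) (fun a => lift H phi i a n).
Proof.
  intros hn a b hab; induction hn as [|n hn IH]; [rewrite !lift_self; exact hab|].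
  rewrite !lift_S by lia; apply phi_proper, IH.
Qed.

Lemma lift_mul {i} (a b : gT (H i)) {n} : (i <= n)%nat ->
  geq _ (lift H phi i (gmul _ a b) n) (gmul _ (lift H phi i a n) (lift H phi i b n)).
Proof.
  intros hn; induction hn as [|n hn IH]; [rewrite !lift_self; reflexivity|].
  rewrite !lift_S by lia; rewrite <- phi_mul; apply phi_proper, IH.
Qed.

Lemma lift_geq_up {i j} (a : gT (H i)) (b : gT (H j)) {n m} :
  (i <= n)%nat -> (j <= n)%nat -> (n <= m)%nat ->
  geq _ (lift H phi i a n) (lift H phi j b n) -> geq _ (lift H phi i a m) (lift H phi j b m).
Proof.
  intros hi hj hm hab.
  rewrite <- (lift_lift a hi hm), <- (lift_lift b hj hm); apply (lift_proper hm); exact hab.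
Qed.

Variable lvl : nat -> nat.
Hypothesis lvl_mono : forall N K, (N <= K)%nat -> (lvl N <= lvl K)%nat.
Hypothesis le_lvl : forall K, (K <= lvl K)%nat.

Variable E : forall K, gT Wsum -> gT (H (lvl K)).
Hypothesis E_mem : forall K x, gmem Wsum x -> gmem _ (E K x).
Hypothesis E_proper : forall K x y, geq Wsum x y -> geq _ (E K x) (E K y).
Hypothesis E_mul : forall K x y, geq _ (E K (gmul Wsum x y)) (gmul _ (E K x) (E K y)).
Hypothesis E_faithful : forall K x y, geq _ (E K x) (E K y) ->
  forall i, (i <= K)%nat -> geq (Wg i) (x i) (y i).
Hypothesis E_lift : forall N K x, (N <= K)%nat -> supported_upto N x ->
  geq _ (lift H phi (lvl N) (E N x) (lvl K)) (E K x).

Definition Wsum_to_dirlim (x : gT Wsum) : gT (dirlim H phi) :=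
  existT _ (lvl (support_bound x)) (E (support_bound x) x).

Lemma Wsum_to_dirlim_lift {x K} : gmem Wsum x -> (support_bound x <= K)%nat ->
  geq _ (lift H phi _ (projT2 (Wsum_to_dirlim x)) (lvl K)) (E K x).
Proof. intros hx hK; exact (E_lift _ _ _ hK (support_boundP hx)). Qed.

Lemma Wsum_to_dirlim_geq x y : gmem Wsum x -> gmem Wsum y ->
  (geq _ (Wsum_to_dirlim x) (Wsum_to_dirlim y) <-> geq Wsum x y).
Proof.
  intros hx hy; split.
  - intros [n [hxn [hyn hxy]]].
    set (K := Nat.max n (Nat.max (support_bound x) (support_bound y))).
    assert (hEK : geq _ (E K x) (E K y)).
    { rewrite <- (Wsum_to_dirlim_lift hx), <- (Wsum_to_dirlim_lift hy) by lia.
      apply (lift_geq_up _ _ hxn hyn); [specialize (le_lvl K); lia | exact hxy]. }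
    intros i; destruct (Nat.le_gt_cases i K) as [hi|hi]; [exact (E_faithful _ _ _ hEK i hi)|].
    rewrite (support_boundP hx i), (support_boundP hy i) by lia; reflexivity.
  - intros hxy; set (K := Nat.max (support_bound x) (support_bound y)).
    exists (lvl K); split; [apply lvl_mono; lia | split; [apply lvl_mono; lia|]].
    rewrite (Wsum_to_dirlim_lift hx), (Wsum_to_dirlim_lift hy) by lia; exact (E_proper K _ _ hxy).
Qed.

Lemma Wsum_to_dirlim_mul x y : gmem Wsum x -> gmem Wsum y ->
  geq _ (Wsum_to_dirlim (gmul _ x y)) (gmul _ (Wsum_to_dirlim x) (Wsum_to_dirlim y)).
Proof.
  intros hx hy; pose proof (Wsum_mem_mul hx hy) as hxy.
  set (K := Nat.max (support_bound (gmul _ x y)) (Nat.max (support_bound x) (support_bound y))).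
  assert (hxK : (lvl (support_bound x) <= lvl K)%nat) by (apply lvl_mono; lia).
  assert (hyK : (lvl (support_bound y) <= lvl K)%nat) by (apply lvl_mono; lia).
  exists (lvl K); split; [apply lvl_mono; lia | split; [simpl; lia|]].
  rewrite (Wsum_to_dirlim_lift hxy) by lia; simpl.
  rewrite lift_mul by lia.
  rewrite !lift_lift by lia.
  rewrite (Wsum_to_dirlim_lift hx), (Wsum_to_dirlim_lift hy) by lia; apply E_mul.
Qed.

Lemma Wsum_embeds_dirlim : embeds Wsum (dirlim H phi).
Proof.
  exists Wsum_to_dirlim; split; [|split].
  - intros x hx; exact (E_mem _ _ hx).
  - exact Wsum_to_dirlim_geq.
  - exact Wsum_to_dirlim_mul.
Qed.

End DirlimEmbedding.

(** * The embedding into (Z wr)^oo *)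

Definition W_incl (i : nat) (a : gT (Wg i)) : gT (Wg (S i)) :=
  ((fun j : Z => if Z.eq_dec j 0 then a else gone (Wg i)), 0).

Fixpoint W_pack (K : nat) (x : gT Wsum) : gT (Wg (S K)) :=
  match K with
  | O => gone (Wg 1)
  | S K' => ((fun j : Z => if Z.eq_dec j 0 then W_pack K' x
                          else if Z.eq_dec j 1 then x (S K') else gone (Wg (S K'))), 0)
  end.

Ltac Wsimpl := cbn [W_pack W_incl gmul Wg wrZ fst snd].

#[export] Instance W_incl_proper i : Proper (geq _ ==> geq _) (W_incl i).
Proof.
  intros a b hab; split; [|reflexivity]; intros j; Wsimpl.
  destruct (Z.eq_dec j 0); [exact hab | reflexivity].
Qed.

Lemma W_incl_mul i a b : geq _ (W_incl i (gmul _ a b)) (gmul _ (W_incl i a) (W_incl i b)).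
Proof.
  split; [|reflexivity]; intros j; Wsimpl; rewrite Z.sub_0_r.
  destruct (Z.eq_dec j 0); [reflexivity | symmetry; exact (Wg_mul_one i)].
Qed.

Lemma W_pack_mem K x : gmem Wsum x -> gmem _ (W_pack K x).
Proof.
  intros hx; induction K as [|K IH]; [apply Wg_mem_one|]; split.
  - intros j; Wsimpl; destruct (Z.eq_dec j 0); [exact IH|].
    destruct (Z.eq_dec j 1); [exact (proj1 hx (S K)) | exact (Wg_mem_one (S K))].
  - exists 1; intros j hj; Wsimpl.
    destruct (Z.eq_dec j 0); [lia|]; destruct (Z.eq_dec j 1); [lia | reflexivity].
Qed.

Lemma W_pack_proper K x y : geq Wsum x y -> geq _ (W_pack K x) (W_pack K y).
Proof.
  intros hxy; induction K as [|K IH]; [reflexivity|]; split; [|reflexivity]; intros j; Wsimpl.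
  destruct (Z.eq_dec j 0); [exact IH|]; destruct (Z.eq_dec j 1); [exact (hxy (S K)) | reflexivity].
Qed.

Lemma W_pack_mul K x y : geq _ (W_pack K (gmul Wsum x y)) (gmul _ (W_pack K x) (W_pack K y)).
Proof.
  induction K as [|K IH]; [symmetry; apply Wg_mul_one|].
  split; [|reflexivity]; intros j; Wsimpl; rewrite Z.sub_0_r.
  destruct (Z.eq_dec j 0); [exact IH|]; destruct (Z.eq_dec j 1); [reflexivity|].
  symmetry; exact (Wg_mul_one (S K)).
Qed.

Lemma W_pack_faithful K x y : geq _ (W_pack K x) (W_pack K y) ->
  forall i, (i <= K)%nat -> geq (Wg i) (x i) (y i).
Proof.
  induction K as [|K IH]; intros [h _] i hi.
  - replace i with 0%nat by lia; exact I.
  - destruct (Nat.eq_dec i (S K)) as [->|ne]; [exact (h 1)|].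
    apply IH; [exact (h 0) | lia].
Qed.

Lemma W_pack_lift N K x : (N <= K)%nat -> supported_upto N x ->
  geq _ (lift Wg W_incl (S N) (W_pack N x) (S K)) (W_pack K x).
Proof.
  intros hNK hx; induction hNK as [|K hNK IH]; [rewrite lift_self; reflexivity|].
  rewrite lift_S by lia; rewrite IH; split; [|reflexivity]; intros j; Wsimpl.
  destruct (Z.eq_dec j 0); [reflexivity|]; destruct (Z.eq_dec j 1); [|reflexivity].
  symmetry; apply (hx (S K)); lia.
Qed.

Lemma Wsum_embeds_ZwrInf : embeds Wsum ZwrInf.
Proof.
  exact (Wsum_embeds_dirlim Wg W_incl Wg_mul_proper W_incl_proper W_incl_mul
           S (fun N K => le_n_S N K) Nat.le_succ_diag_r
           W_pack W_pack_mem W_pack_proper W_pack_mul W_pack_faithful W_pack_lift).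
Qed.

(** * Coordinates on Z^(n+1) and permutation wreath products *)

Fixpoint ycat (a b : nat) : Yt a -> Yt b -> Yt (a + S b) :=
  match a return Yt a -> Yt b -> Yt (a + S b) with
  | O => fun x y => (x, y)
  | S a' => fun x y => (fst x, ycat a' b (snd x) y)
  end.

Fixpoint ysplit (a b : nat) : Yt (a + S b) -> Yt a * Yt b :=
  match a return Yt (a + S b) -> Yt a * Yt b with
  | O => fun p => p
  | S a' => fun p => let q := ysplit a' b (snd p) in ((fst p, fst q), snd q)
  end.

Lemma ysplit_cat a b x y : ysplit a b (ycat a b x y) = (x, y).
Proof.
  revert x; induction a as [|a IH]; intros x; [reflexivity|].
  simpl; rewrite IH; destruct x; reflexivity.
Qed.

Lemma ycat_split a b p : ycat a b (fst (ysplit a b p)) (snd (ysplit a b p)) = p.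
Proof.
  revert p; induction a as [|a IH]; intros p; destruct p; [reflexivity|].
  simpl; rewrite IH; reflexivity.
Qed.

Ltac ysimpl := repeat progress (simpl; rewrite ?ysplit_cat).
Ltac ysimpl_in h := repeat progress (simpl in h; rewrite ?ysplit_cat in h).

Lemma ycat_inj {a b x y x' y'} : ycat a b x y = ycat a b x' y' -> x = x' /\ y = y'.
Proof.
  intros h; apply (f_equal (ysplit a b)) in h; rewrite !ysplit_cat in h.
  injection h; auto.
Qed.

Lemma ycat_surj a b p : exists x y, p = ycat a b x y.
Proof. exists (fst (ysplit a b p)), (snd (ysplit a b p)); symmetry; apply ycat_split. Qed.

Lemma perm_ext X (s t : perm X) :
  (forall x, fst s x = fst t x) -> (forall x, snd s x = snd t x) -> s = t.
Proof.
  destruct s as [s1 s2], t as [t1 t2]; simpl; intros h1 h2.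
  f_equal; apply functional_extensionality; assumption.
Qed.

Lemma pmul_assoc {X} (s t u : perm X) : pmul (pmul s t) u = pmul s (pmul t u).
Proof. reflexivity. Qed.

Lemma pmul_pid_l X (s : perm X) : pmul (pid X) s = s.
Proof. apply perm_ext; reflexivity. Qed.

Lemma pmul_pid_r X (s : perm X) : pmul s (pid X) = s.
Proof. apply perm_ext; reflexivity. Qed.

Lemma isperm_pid X : isperm (pid X).
Proof. split; reflexivity. Qed.

Lemma isperm_pmul X (s t : perm X) : isperm s -> isperm t -> isperm (pmul s t).
Proof. intros [h1 h2] [h3 h4]; split; simpl; intros; congruence. Qed.

Lemma isperm_fixed {X} {s : perm X} {x} : isperm s -> fst s x = x -> snd s x = x.
Proof. intros [h _] e; rewrite <- e at 1; apply h. Qed.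

Lemma Ppred_pid n : Ppred n (pid _).
Proof.
  destruct n; [exists 0; apply perm_ext; simpl; intros; lia | apply gen_one].
Qed.

Lemma Ppred_pmul n s t : Ppred n s -> Ppred n t -> Ppred n (pmul s t).
Proof.
  destruct n; simpl; intros hs ht; [|apply gen_mul; assumption].
  destruct hs as [m ->], ht as [m' ->]; exists (m + m'); apply perm_ext; simpl; intros; lia.
Qed.

Section Fibres.

Variables a b : nat.

Definition fibrewise (h : Yt b -> perm (Yt a)) : perm (Yt (a + S b)) :=
  (fun p => let q := ysplit a b p in ycat a b (fst (h (snd q)) (fst q)) (snd q),
   fun p => let q := ysplit a b p in ycat a b (snd (h (snd q)) (fst q)) (snd q)).

Definition on_fibre (c : Yt b) (s : perm (Yt a)) : perm (Yt (a + S b)) :=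
  fibrewise (fun v => if Ydec b v c then s else pid _).

Definition on_top (l : perm (Yt b)) : perm (Yt (a + S b)) :=
  (fun p => let q := ysplit a b p in ycat a b (fst q) (fst l (snd q)),
   fun p => let q := ysplit a b p in ycat a b (fst q) (snd l (snd q))).

Lemma fibrewise_pid : fibrewise (fun _ => pid _) = pid _.
Proof. apply perm_ext; intros p; apply ycat_split. Qed.

Lemma fibrewise_pmul h g :
  fibrewise (fun v => pmul (h v) (g v)) = pmul (fibrewise h) (fibrewise g).
Proof. apply perm_ext; intros p; ysimpl; reflexivity. Qed.

Lemma isperm_fibrewise h : (forall v, isperm (h v)) -> isperm (fibrewise h).
Proof.
  intros hh; split; intros p; destruct (ycat_surj a b p) as [u [v ->]];
    ysimpl; f_equal; apply hh.
Qed.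

Lemma isperm_on_fibre c s : isperm s -> isperm (on_fibre c s).
Proof.
  intros hs; apply isperm_fibrewise; intros v; destruct (Ydec b v c); [exact hs | apply isperm_pid].
Qed.

Lemma on_fibre_pid c : on_fibre c (pid _) = pid _.
Proof.
  unfold on_fibre; rewrite <- fibrewise_pid; f_equal.
  apply functional_extensionality; intros v; destruct (Ydec b v c); reflexivity.
Qed.

Lemma on_fibre_pmul c s t : on_fibre c (pmul s t) = pmul (on_fibre c s) (on_fibre c t).
Proof.
  unfold on_fibre; rewrite <- fibrewise_pmul; f_equal.
  apply functional_extensionality; intros v; destruct (Ydec b v c); [reflexivity|].
  symmetry; apply pmul_pid_l.
Qed.

Lemma on_fibre_pinv c s : on_fibre c (pinv s) = pinv (on_fibre c s).
Proof. apply perm_ext; intros p; simpl; destruct (Ydec b _ c); reflexivity. Qed.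

Lemma on_top_pmul l l' : on_top (pmul l l') = pmul (on_top l) (on_top l').
Proof. apply perm_ext; intros p; ysimpl; reflexivity. Qed.

Lemma isperm_on_top l : isperm l -> isperm (on_top l).
Proof.
  intros [h1 h2]; split; intros p; destruct (ycat_surj a b p) as [u [v ->]];
    ysimpl; [rewrite h1 | rewrite h2]; reflexivity.
Qed.

Lemma on_fibre_on_top_apply c s l u r :
  fst (pmul (on_fibre c s) (on_top l)) (ycat a b u r)
  = ycat a b (if Ydec b r c then fst s u else u) (fst l r).
Proof. ysimpl; destruct (Ydec b r c); reflexivity. Qed.

Lemma on_fibre_on_top_comm c s l : isperm l -> fst l c = c ->
  pmul (on_fibre c s) (on_top l) = pmul (on_top l) (on_fibre c s).
Proof.
  intros hl hc; pose proof (isperm_fixed hl hc) as hc'; destruct hl as [h1 h2].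
  apply perm_ext; intros p; destruct (ycat_surj a b p) as [u [r ->]];
    ysimpl.
  - destruct (Ydec b r c) as [->|ne].
    + rewrite hc; destruct (Ydec b c c); [reflexivity | congruence].
    + destruct (Ydec b (fst l r) c) as [e|]; [|reflexivity].
      destruct ne; rewrite <- (h1 r), e; exact hc'.
  - destruct (Ydec b r c) as [->|ne].
    + rewrite hc'; destruct (Ydec b c c); [reflexivity | congruence].
    + destruct (Ydec b (snd l r) c) as [e|]; [|reflexivity].
      destruct ne; rewrite <- (h2 r), e; exact hc.
Qed.

End Fibres.

Lemma Ppred_on_top a b l : Ppred b l -> Ppred (a + S b) (on_top a b l).
Proof.
  revert l; induction a as [|a IH]; intros l hl; apply gen_base; right.
  - exists l; split; [exact hl | apply perm_ext; intros [z r]; reflexivity].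
  - exists (on_top a b l); split; [exact (IH l hl) | apply perm_ext; intros [z r]; reflexivity].
Qed.

Lemma on_fibre_basegen a b c k y :
  on_fibre (S a) b c (basegen (Ydec a) k y) = basegen (Ydec (a + S b)) k (ycat a b y c).
Proof.
  apply perm_ext; intros [z r]; destruct (ycat_surj a b r) as [u [v ->]]; ysimpl;
    destruct (Ydec b v c) as [ev|nv]; simpl; destruct (Ydec a u y) as [eu|nu]; simpl;
    destruct (Ydec _ (ycat a b u v) (ycat a b y c)) as [e|ne];
    try (apply ycat_inj in e; destruct e); subst; simpl; congruence.
Qed.

Lemma on_fibre_topgen a b c l :
  on_fibre (S a) b c (topgen Z l) = topgen Z (on_fibre a b c l).
Proof.
  apply perm_ext; intros [z r]; destruct (ycat_surj a b r) as [u [v ->]]; ysimpl;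
    destruct (Ydec b v c); reflexivity.
Qed.

Lemma Ppred_on_fibre a b c s : Ppred a s -> Ppred (a + S b) (on_fibre a b c s).
Proof.
  revert s; induction a as [|a IH]; intros s hs.
  - apply gen_base; left; exists s, c; split; [exact hs|].
    apply perm_ext; intros [z r]; simpl; destruct (Ydec b r c); reflexivity.
  - induction hs as [s [[k [y [hk ->]]] | [l [hl ->]]] | | s t _ IHs _ IHt | s _ IHs
                     | s t _ IHs e1 e2].
    + rewrite on_fibre_basegen; apply gen_base; left.
      exists k, (ycat a b y c); split; [exact hk | reflexivity].
    + rewrite on_fibre_topgen; apply gen_base; right.
      exists (on_fibre a b c l); split; [exact (IH l hl) | reflexivity].
    + rewrite on_fibre_pid; apply gen_one.
    + rewrite on_fibre_pmul; apply gen_mul; assumption.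
    + rewrite on_fibre_pinv; apply gen_inv; assumption.
    + replace t with s by (apply perm_ext; assumption); assumption.
Qed.

Lemma Ppred_fibrewise a b (l : list (Yt b)) h : (forall v, Ppred a (h v)) ->
  (forall v, ~ In v l -> h v = pid _) -> Ppred (a + S b) (fibrewise a b h).
Proof.
  revert h; induction l as [|c l IH]; intros h hP hl.
  - replace h with (fun _ : Yt b => pid (Yt a)).
    + rewrite fibrewise_pid; apply Ppred_pid.
    + apply functional_extensionality; intros v; symmetry; apply hl; auto.
  - set (h' := fun v => if Ydec b v c then pid _ else h v).
    replace (fibrewise a b h) with (pmul (fibrewise a b h') (on_fibre a b c (h c))).
    + apply Ppred_pmul; [|apply Ppred_on_fibre, hP].
      apply IH.
      * intros v; unfold h'; destruct (Ydec b v c); [apply Ppred_pid | apply hP].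
      * intros v hv; unfold h'; destruct (Ydec b v c); [reflexivity|].
        apply hl; simpl; intuition.
    + unfold on_fibre; rewrite <- fibrewise_pmul; f_equal.
      apply functional_extensionality; intros v; unfold h'.
      destruct (Ydec b v c) as [->|]; [apply pmul_pid_l | apply pmul_pid_r].
Qed.

(** * W_(k+1) as a subgroup of P_(k+1) *)

(* [dim k] is [k], but [dim (S k)] unfolds to [dim k + S 0], the shape of the
   indices produced by [ycat]. *)
Fixpoint dim (k : nat) : nat :=
  match k with O => O | S k' => (dim k' + 1)%nat end.

Fixpoint const_pt (v : Z) (a : nat) : Yt a :=
  match a return Yt a with O => v | S a' => (v, const_pt v a') end.

Definition shift (n : Z) : perm Z := (fun x => x + n, fun x => x - n).

(* The top coordinate moves by [- n]: in [(f, n) * (g, m)] the second factor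
   is read at [i - n]. *)
Fixpoint Wperm (k : nat) : gT (Wg (S k)) -> perm (Yt (dim k)) :=
  match k return gT (Wg (S k)) -> perm (Yt (dim k)) with
  | O => fun w => shift (- snd w)
  | S k' => fun w => pmul (fibrewise (dim k') 0 (fun j => Wperm k' (fst w j)))
                          (on_top (dim k') 0 (shift (- snd w)))
  end.

Lemma Wperm_S k f n : Wperm (S k) (f, n)
  = pmul (fibrewise (dim k) 0 (fun j => Wperm k (f j))) (on_top (dim k) 0 (shift (- n))).
Proof. reflexivity. Qed.

Lemma shift_add n m : shift (n + m) = pmul (shift n) (shift m).
Proof. apply perm_ext; simpl; intros; lia. Qed.

Lemma on_top_shift_fibrewise a n h :
  pmul (on_top a 0 (shift n)) (fibrewise a 0 h)
  = pmul (fibrewise a 0 (fun j => h (j + n))) (on_top a 0 (shift n)).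
Proof.
  apply perm_ext; intros p; destruct (ycat_surj a 0 p) as [y [j ->]]; ysimpl; [reflexivity|].
  replace (j - n + n) with j by lia; reflexivity.
Qed.

Lemma isperm_Wperm k w : isperm (Wperm k w).
Proof.
  revert w; induction k as [|k IH]; intros w.
  - split; simpl; intros; lia.
  - apply isperm_pmul; [apply isperm_fibrewise; intros; apply IH|].
    apply isperm_on_top; split; simpl; intros; lia.
Qed.

Lemma Wperm_mul k w w' : Wperm k (gmul _ w w') = pmul (Wperm k w) (Wperm k w').
Proof.
  revert w w'; induction k as [|k IH]; intros [f n] [f' n'].
  - apply perm_ext; simpl; intros; lia.
  - change (gmul (Wg (S (S k))) (f, n) (f', n'))
      with ((fun j => gmul (Wg (S k)) (f j) (f' (j - n)), n + n') : gT (Wg (S (S k)))).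
    rewrite !Wperm_S.
    replace (- (n + n')) with (- n + - n') by lia.
    rewrite shift_add, on_top_pmul.
    replace (fun j : Yt 0 => Wperm k (gmul _ (f j) (f' (j - n))))
      with (fun j : Yt 0 => pmul (Wperm k (f j)) (Wperm k (f' (j + - n))))
      by (apply functional_extensionality; intros j; rewrite IH; reflexivity).
    rewrite fibrewise_pmul, !pmul_assoc, <- (pmul_assoc (on_top (dim k) 0 (shift (- n)))).
    rewrite on_top_shift_fibrewise; reflexivity.
Qed.

Lemma Wperm_proper k w w' : geq _ w w' -> Wperm k w = Wperm k w'.
Proof.
  revert w w'; induction k as [|k IH]; intros [f n] [f' n'] [h e]; simpl in e; subst n'.
  - reflexivity.
  - cbn [Wperm fst snd]; f_equal; f_equal.
    apply functional_extensionality; intros j; apply IH, h.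
Qed.

Lemma Wperm_one k : Wperm k (gone _) = pid _.
Proof.
  induction k as [|k IH].
  - apply perm_ext; simpl; intros; lia.
  - change (gone (Wg (S (S k)))) with ((fun _ : Z => gone (Wg (S k)), 0) : gT (Wg (S (S k)))).
    rewrite Wperm_S, IH, fibrewise_pid, pmul_pid_l.
    apply perm_ext; intros p; ysimpl; rewrite ?Z.add_0_r, ?Z.sub_0_r; apply ycat_split.
Qed.

Lemma Wperm_faithful k w w' :
  (forall y, fst (Wperm k w) y = fst (Wperm k w') y) -> geq _ w w'.
Proof.
  revert w w'; induction k as [|k IH]; intros [f n] [f' n'] h.
  - split; [intros; exact I|]; specialize (h 0); simpl in *; lia.
  - assert (hn : n = n').
    { specialize (h (ycat (dim k) 0 (const_pt 0 _) 0)).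
      ysimpl_in h; apply ycat_inj in h; lia. }
    split; [|exact hn]; intros j; apply IH; intros y.
    specialize (h (ycat (dim k) 0 y j)); ysimpl_in h; apply ycat_inj in h; exact (proj1 h).
Qed.

Fixpoint Zball (N : nat) : list Z :=
  match N with
  | O => 0 :: nil
  | S M => Z.of_nat N :: - Z.of_nat N :: Zball M
  end.

Lemma in_Zball N j : Z.abs j <= Z.of_nat N -> In j (Zball N).
Proof.
  induction N as [|N IH]; intros hj; simpl; [lia|].
  destruct (Z.eq_dec j (Z.of_nat (S N))); [left; lia|].
  destruct (Z.eq_dec j (- Z.of_nat (S N))); [right; left; lia|].
  right; right; apply IH; lia.
Qed.

Lemma Ppred_Wperm k w : gmem _ w -> Ppred (dim k) (Wperm k w).
Proof.
  revert w; induction k as [|k IH]; intros [f n] hw.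
  - exists (- n); reflexivity.
  - destruct hw as [hf [N hN]]; rewrite Wperm_S; apply Ppred_pmul.
    + apply (Ppred_fibrewise _ 0 (Zball (Z.to_nat N))); [intros j; apply IH, hf|].
      intros j hj; rewrite <- (Wperm_one k); apply Wperm_proper, hN.
      destruct (Z_le_gt_dec (Z.abs j) N); [|lia].
      destruct hj; apply in_Zball; lia.
    + apply Ppred_on_top; exists (- n); reflexivity.
Qed.

(** * The embedding into (wr Z)^oo *)

Definition P_incl (n : nat) (l : gT (Pg n)) : gT (Pg (S n)) := topgen Z l.

#[export] Instance PermG_equiv X (P : perm X -> Prop) : Equivalence (geq (PermG P)).
Proof. split; repeat intro; simpl in *; congruence. Qed.

Lemma PermG_mul_proper X (P : perm X -> Prop) :
  Proper (geq _ ==> geq _ ==> geq _) (gmul (PermG P)).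
Proof. intros s s' hs t t' ht x; simpl in *; rewrite hs, ht; reflexivity. Qed.

Lemma P_incl_proper n : Proper (geq _ ==> geq _) (P_incl n).
Proof. intros l l' hl [z r]; simpl in *; rewrite hl; reflexivity. Qed.

Lemma P_incl_mul n l l' : geq _ (P_incl n (gmul _ l l')) (gmul _ (P_incl n l) (P_incl n l')).
Proof. intros p; reflexivity. Qed.

Lemma lift_on_top a b l : lift Pg P_incl b l (a + S b) = on_top a b l.
Proof.
  induction a as [|a IH].
  - change (0 + S b)%nat with (S b); rewrite lift_S, lift_self by lia.
    apply perm_ext; intros [z r]; reflexivity.
  - change (S a + S b)%nat with (S (a + S b)); rewrite lift_S, IH by lia.
    apply perm_ext; intros [z r]; reflexivity.
Qed.

Fixpoint P_level (K : nat) : nat :=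
  match K with O => O | S K' => (dim K' + S (P_level K'))%nat end.

(* [P_pack K x] fixes [slot K] and [spare K]; the next component acts on the
   fibre over [slot K], and [spare K] yields the next slot and spare. *)
Fixpoint spare (K : nat) : Yt (P_level K) :=
  match K return Yt (P_level K) with
  | O => 1
  | S K' => ycat (dim K') (P_level K') (const_pt 1 _) (spare K')
  end.

Definition slot (K : nat) : Yt (P_level K) :=
  match K return Yt (P_level K) with
  | O => 0
  | S K' => ycat (dim K') (P_level K') (const_pt 0 _) (spare K')
  end.

Lemma slot_neq_spare K : slot K <> spare K.
Proof.
  destruct K as [|K]; simpl; [discriminate|].
  intros h; apply ycat_inj in h; destruct h as [h _]; revert h.
  destruct (dim K); simpl; [discriminate | intros h; injection h; discriminate].
Qed.

Fixpoint P_pack (K : nat) (x : gT Wsum) : perm (Yt (P_level K)) :=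
  match K return perm (Yt (P_level K)) with
  | O => pid _
  | S K' => pmul (on_fibre (dim K') (P_level K') (slot K') (Wperm K' (x (S K'))))
                 (on_top (dim K') (P_level K') (P_pack K' x))
  end.

Lemma P_pack_S_apply K x u r :
  fst (P_pack (S K) x) (ycat (dim K) (P_level K) u r)
  = ycat (dim K) (P_level K) (if Ydec _ r (slot K) then fst (Wperm K (x (S K))) u else u)
         (fst (P_pack K x) r).
Proof. apply on_fibre_on_top_apply. Qed.

Lemma isperm_P_pack K x : isperm (P_pack K x).
Proof.
  induction K as [|K IH]; [apply isperm_pid|].
  apply isperm_pmul; [apply isperm_on_fibre, isperm_Wperm | apply isperm_on_top, IH].
Qed.

Lemma P_pack_fixes K x :
  fst (P_pack K x) (slot K) = slot K /\ fst (P_pack K x) (spare K) = spare K.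
Proof.
  induction K as [|K [_ hs]]; [split; reflexivity|].
  pose proof (slot_neq_spare K) as ne; simpl slot; simpl spare; rewrite !P_pack_S_apply, hs.
  destruct (Ydec _ (spare K) (slot K)); [congruence | split; reflexivity].
Qed.

Lemma P_pack_mul K x y : P_pack K (gmul Wsum x y) = pmul (P_pack K x) (P_pack K y).
Proof.
  induction K as [|K IH]; [symmetry; apply pmul_pid_l|].
  cbn [P_pack]; change (gmul Wsum x y (S K)) with (gmul (Wg (S K)) (x (S K)) (y (S K))).
  rewrite Wperm_mul, on_fibre_pmul, IH, on_top_pmul, !pmul_assoc.
  rewrite <- (pmul_assoc (on_fibre _ _ (slot K) (Wperm K (y (S K))))).
  rewrite on_fibre_on_top_comm by (apply isperm_P_pack || apply P_pack_fixes).
  reflexivity.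
Qed.

Lemma P_pack_proper K x y : geq Wsum x y -> P_pack K x = P_pack K y.
Proof.
  intros hxy; induction K as [|K IH]; [reflexivity|].
  simpl P_pack; rewrite IH, (Wperm_proper K _ _ (hxy (S K))); reflexivity.
Qed.

Lemma Ppred_P_pack K x : (forall i, gmem (Wg i) (x i)) -> Ppred (P_level K) (P_pack K x).
Proof.
  intros hx; induction K as [|K IH]; [apply Ppred_pid|].
  apply Ppred_pmul; [apply Ppred_on_fibre, Ppred_Wperm, hx | apply Ppred_on_top, IH].
Qed.

Lemma P_pack_faithful K x y : (forall p, fst (P_pack K x) p = fst (P_pack K y) p) ->
  forall i, (i <= K)%nat -> geq (Wg i) (x i) (y i).
Proof.
  induction K as [|K IH]; intros h i hi; [replace i with 0%nat by lia; exact I|].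
  destruct (Nat.eq_dec i (S K)) as [->|ne].
  - apply (Wperm_faithful K); intros u.
    specialize (h (ycat _ _ u (slot K))); rewrite !P_pack_S_apply in h.
    rewrite (proj1 (P_pack_fixes K x)), (proj1 (P_pack_fixes K y)) in h.
    destruct (Ydec _ (slot K) (slot K)); [|congruence].
    exact (proj1 (ycat_inj h)).
  - apply IH; [|lia]; intros r.
    destruct (Ydec _ r (slot K)) as [->|nr].
    + rewrite (proj1 (P_pack_fixes K x)), (proj1 (P_pack_fixes K y)); reflexivity.
    + specialize (h (ycat _ _ (const_pt 0 _) r)); rewrite !P_pack_S_apply in h.
      destruct (Ydec _ r (slot K)); [congruence|].
      exact (proj2 (ycat_inj h)).
Qed.

Lemma P_level_mono {N K} : (N <= K)%nat -> (P_level N <= P_level K)%nat.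
Proof. induction 1; simpl; lia. Qed.

Lemma le_P_level K : (K <= P_level K)%nat.
Proof. induction K; simpl; lia. Qed.

Lemma P_pack_lift N K x : (N <= K)%nat -> supported_upto N x ->
  lift Pg P_incl (P_level N) (P_pack N x) (P_level K) = P_pack K x.
Proof.
  intros hNK hx; induction hNK as [|K hNK IH]; [apply lift_self|].
  rewrite <- (lift_lift Pg P_incl (P_pack N x) (P_level_mono hNK)
                (P_level_mono (Nat.le_succ_diag_r K))).
  simpl P_level; rewrite IH, lift_on_top; simpl P_pack.
  rewrite (Wperm_proper K _ _ (hx (S K) (le_n_S _ _ hNK))), Wperm_one, on_fibre_pid.
  symmetry; apply pmul_pid_l.
Qed.

Lemma Wsum_embeds_wrZInf : embeds Wsum wrZInf.
Proof.
  apply (Wsum_embeds_dirlim Pg P_incl (fun n => PermG_mul_proper _ (Ppred n))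
           P_incl_proper P_incl_mul
           P_level (@P_level_mono) le_P_level P_pack).
  - intros K x [hx _]; split; [apply isperm_P_pack | apply Ppred_P_pack, hx].
  - intros K x y hxy p; rewrite (P_pack_proper K x y hxy); reflexivity.
  - intros K x y p; rewrite P_pack_mul; reflexivity.
  - intros K x y h; apply P_pack_faithful, h.
  - intros N K x hNK hx p; rewrite (P_pack_lift N K x hNK hx); reflexivity.
Qed.

Theorem lemma22 : embeds Wsum wrZInf /\ embeds Wsum ZwrInf.
Proof. split; [exact Wsum_embeds_wrZInf | exact Wsum_embeds_ZwrInf]. Qed.
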